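(* Let $(\mathbb R^4,g)$ be the pp-wave $g=-(x^2+y^2)\,du^2+2\,du\,dv+dx^2+dy^2$ in coordinates $(u,v,x,y)$, and let $Z:=\tfrac12(H+k^2+h^2)\partial_v-\partial_u+k\partial_x+h\partial_y$ with $H=-x^2-y^2$, $k=-y$, $h=x$ (so $Z=-\partial_u-y\partial_x+x\partial_y$). Then $(\mathbb R^4,g,Z,\nabla u)$ is admissible (with $\nabla u=\partial_v$, $\tau=u$, $\ell=1$, and orientation such that $J=J_{g,Z,\nabla u}$ satisfies $JX=Y$ for $X:=k\partial_v+\partial_x$, $Y:=h\partial_v+\partial_y$), and the induced tensor $g_K=d(e^uZ^\flat)(\cdot,J\cdot)$ is a Kähler metric on all of $\mathbb R^4$.
   Context: Admissibility: an oriented semi-Riemannian $4$-manifold $(M,g)$ with vector fields $k_+,k_-$ (here $k_+=Z$, $k_-=\nabla u$) is admissible if $k_\pm$ are pointwise linearly independent, $\mathcal V:=\mathrm{span}(k_+,k_-)$ has spacelike orthogonal complement $\mathcal H$, and, with $J=J_{g,k_+,k_-}$ defined by $Jk_+=k_-$, $Jk_-=-k_+$, $Je_1=e_2$, $Je_2=-e_1$ for positively oriented orthonormal frames $(e_1,e_2)$ of $\mathcal H$: $[k_\pm,\Gamma(\mathcal H)]\subset\Gamma(\mathcal H)$; $J\circ\nabla^ok_+=\nabla^ok_-$ on $\mathcal H$, where $\nabla^oX$ is the trace-free symmetric part of $\mathcal H\to\mathcal H$, $v\mapsto(\nabla_vX)^{\mathcal H}$; $k_-=\ell\nabla\tau$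 for smooth $\ell,\tau$; and $\nabla(g(k_+,k_-))$, $\nabla(g(k_+,k_+))$ take values in $\mathcal V$. $Z^\flat=g(Z,\cdot)$. The induced metric $g_K:=d(f(\tau)k_+^\flat)(\cdot,J\cdot)$ is Kähler where $f\iota<0$ and $f'G/\ell-f\,dk_+^\flat(k_+,k_-)<0$, with $\iota=g(k_+,[e_1,e_2])$ and $G=g(k_+,k_+)g(k_-,k_-)-g(k_+,k_-)^2$. *)

(* classical reals. Everything is done concretely on R^4 with
   global coordinates indexed 0,1,2,3 = (u,v,x,y). *)
From Stdlib Require Import Reals Lra ClassicalEpsilon.
Open Scope R_scope.

(* Points and tangent vectors of R^4: only the indices 0..3 are meaningful. *)
Definition Vec := nat -> R.
Definition Field := Vec -> Vec.
Definition Metric := Vec -> nat -> nat -> R.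
Definition Mat := nat -> nat -> R.

Definition sum4 (f : nat -> R) : R := f 0%nat + f 1%nat + f 2%nat + f 3%nat.
Definition sum2 (f : nat -> R) : R := f 0%nat + f 1%nat.
Definition veq (a b : Vec) : Prop := forall i, (i < 4)%nat -> a i = b i.
Definition vzero : Vec := fun _ => 0.
Definition vopp (a : Vec) : Vec := fun i => - a i.
Definition vsub (a b : Vec) : Vec := fun i => a i - b i.
Definition nonzero (a : Vec) : Prop := exists i, (i < 4)%nat /\ a i <> 0.
Definition coord (i : nat) : Vec -> R := fun p => p i.
Definition basis (i : nat) : Vec := fun j => if Nat.eqb j i then 1 else 0.

Definition shift (p : Vec) (i : nat) (t : R) : Vec :=
  fun j => if Nat.eqb j i then p j + t else p j.
Definition has_pd (f : Vec -> R) (i : nat) (p : Vec) (l : R) : Prop :=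
  derivable_pt_lim (fun t => f (shift p i t)) 0 l.
Definition pd (f : Vec -> R) (i : nat) (p : Vec) : R :=
  epsilon (inhabits 0) (fun l => has_pd f i p l).
Definition cont_at (f : Vec -> R) (p : Vec) : Prop :=
  forall eps, 0 < eps -> exists delta, 0 < delta /\
    forall q, (forall i, (i < 4)%nat -> Rabs (q i - p i) < delta) ->
      Rabs (f q - f p) < eps.
CoInductive smooth (f : Vec -> R) : Prop :=
  smooth_intro :
    (forall p, cont_at f p) ->
    (forall i p, (i < 4)%nat -> exists l, has_pd f i p l) ->
    (forall i, (i < 4)%nat -> smooth (pd f i)) -> smooth f.
Definition smooth_field (X : Field) : Prop :=
  forall i, (i < 4)%nat -> smooth (fun p => X p i).

Definition bracket (X Y : Field) : Field := fun p m =>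
  sum4 (fun i => X p i * pd (fun q => Y q m) i p - Y p i * pd (fun q => X q m) i p).

Definition det3 (r1 r2 r3 : nat) (b c d : Vec) : R :=
  b r1 * (c r2 * d r3 - c r3 * d r2) - b r2 * (c r1 * d r3 - c r3 * d r1)
  + b r3 * (c r1 * d r2 - c r2 * d r1).
Definition det4 (a b c d : Vec) : R :=
  a 0%nat * det3 1 2 3 b c d - a 1%nat * det3 0 2 3 b c d
  + a 2%nat * det3 0 1 3 b c d - a 3%nat * det3 0 1 2 b c d.

Definition gdot (g : Metric) (p a b : Vec) : R :=
  sum4 (fun i => sum4 (fun j => g p i j * a i * b j)).
Definition semi_riemannian (g : Metric) : Prop :=
  (forall p i j, g p i j = g p j i) /\
  (forall p, det4 (fun i => g p i 0%nat) (fun i => g p i 1%nat)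
                  (fun i => g p i 2%nat) (fun i => g p i 3%nat) <> 0) /\
  (forall i j, (i < 4)%nat -> (j < 4)%nat -> smooth (fun p => g p i j)).
Definition raise (g : Metric) (p : Vec) (a : nat -> R) : Vec :=
  epsilon (inhabits vzero)
    (fun w => forall k, (k < 4)%nat -> sum4 (fun j => g p j k * w j) = a k).
Definition grad (g : Metric) (f : Vec -> R) (p : Vec) : Vec :=
  raise g p (fun k => pd f k p).
Definition chr1 (g : Metric) (p : Vec) (k i j : nat) : R :=
  / 2 * (pd (fun q => g q j k) i p + pd (fun q => g q i k) j p
         - pd (fun q => g q i j) k p).
Definition nabla (g : Metric) (v : Vec) (X : Field) (p : Vec) : Vec :=
  raise g p (fun k => sum4 (fun i => sum4 (fun j =>
     v i * pd (fun q => X q j) i p * g p j k + chr1 g p k i j * v i * X p j))).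

Definition lin_indep (a b : Vec) : Prop :=
  forall s t, (forall i, (i < 4)%nat -> s * a i + t * b i = 0) -> s = 0 /\ t = 0.
Definition inV (kp km : Field) (p w : Vec) : Prop :=
  exists a b, veq w (fun i => a * kp p i + b * km p i).
Definition inH (g : Metric) (kp km : Field) (p w : Vec) : Prop :=
  gdot g p (kp p) w = 0 /\ gdot g p (km p) w = 0.
Definition ON_frame (g : Metric) (kp km : Field) (p e1 e2 : Vec) : Prop :=
  inH g kp km p e1 /\ inH g kp km p e2 /\
  gdot g p e1 e1 = 1 /\ gdot g p e2 e2 = 1 /\ gdot g p e1 e2 = 0.
(* orientation of R^4 given by a sign o (o = 1: standard); the orientation of
   H is the one for which (k+,k-,e1,e2) is positively oriented *)
Definition pos_frame (o : R) (kp km : Field) (p e1 e2 : Vec) : Prop :=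
  0 < o * det4 (kp p) (km p) e1 e2.
Definition Japply (M : Mat) (w : Vec) : Vec := fun i => sum4 (fun j => M i j * w j).
Definition Jprop (o : R) (g : Metric) (kp km : Field) (p : Vec) (M : Mat) : Prop :=
  veq (Japply M (kp p)) (km p) /\ veq (Japply M (km p)) (vopp (kp p)) /\
  forall e1 e2, ON_frame g kp km p e1 e2 -> pos_frame o kp km p e1 e2 ->
    veq (Japply M e1) e2 /\ veq (Japply M e2) (vopp e1).
Definition Jmat (o : R) (g : Metric) (kp km : Field) (p : Vec) : Mat :=
  epsilon (inhabits (fun _ _ => 0)) (Jprop o g kp km p).
(* nabla^o X applied to v in H_p, computed in an ON frame (e1,e2) of H_p
   (trace-free symmetric part of v |-> (nabla_v X)^H) *)
Definition nabla0 (g : Metric) (X : Field) (p e1 e2 v : Vec) : Vec :=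
  let e := fun a : nat => if Nat.eqb a 0 then e1 else e2 in
  let A := fun a b : nat => gdot g p (nabla g (e b) X p) (e a) in
  let S := fun a b : nat => (A a b + A b a) / 2
             - (if Nat.eqb a b then (A 0%nat 0%nat + A 1%nat 1%nat) / 2 else 0) in
  fun i => sum2 (fun a => sum2 (fun b => S a b * gdot g p v (e b) * e a i)).

Definition admissible (o : R) (g : Metric) (kp km : Field) : Prop :=
  semi_riemannian g /\ smooth_field kp /\ smooth_field km /\
  (forall p, lin_indep (kp p) (km p)) /\
  (forall p w, inH g kp km p w -> nonzero w -> 0 < gdot g p w w) /\
  (forall X, smooth_field X -> (forall p, inH g kp km p (X p)) ->
     forall p, inH g kp km p (bracket kp X p) /\ inH g kp km p (bracket km X p)) /\
  (forall p e1 e2 v, ON_frame g kp km p e1 e2 -> inH g kp km p v ->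
     veq (Japply (Jmat o g kp km p) (nabla0 g kp p e1 e2 v)) (nabla0 g km p e1 e2 v)) /\
  (exists l tau : Vec -> R, smooth l /\ smooth tau /\
     forall p, veq (km p) (fun i => l p * grad g tau p i)) /\
  (forall p, inV kp km p (grad g (fun q => gdot g q (kp q) (km q)) p)) /\
  (forall p, inV kp km p (grad g (fun q => gdot g q (kp q) (kp q)) p)).

Definition alpha (f : R -> R) (tau : Vec -> R) (g : Metric) (kp : Field)
  (p : Vec) (j : nat) : R := f (tau p) * sum4 (fun i => g p i j * kp p i).
Definition dform (a : Vec -> nat -> R) (p x y : Vec) : R :=
  sum4 (fun i => sum4 (fun j =>
    (pd (fun q => a q j) i p - pd (fun q => a q i) j p) * x i * y j)).
Definition gK (o : R) (g : Metric) (kp km : Field) (f : R -> R) (tau : Vec -> R)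
  (p x y : Vec) : R :=
  dform (alpha f tau g kp) p x (Japply (Jmat o g kp km p) y).

Definition JF (J : Vec -> Mat) (X : Field) : Field := fun q => Japply (J q) (X q).
Definition nijenhuis (J : Vec -> Mat) (X Y : Field) : Field := fun p =>
  vsub (vsub (vsub (bracket (JF J X) (JF J Y) p) (JF J (bracket (JF J X) Y) p))
             (JF J (bracket X (JF J Y)) p)) (bracket X Y p).
Definition kahler (J : Vec -> Mat) (h : Vec -> Vec -> Vec -> R) : Prop :=
  (forall i j, (i < 4)%nat -> (j < 4)%nat -> smooth (fun p => J p i j)) /\
  (forall p w, veq (Japply (J p) (Japply (J p) w)) (vopp w)) /\
  (forall a b : Vec, forall p, veq (nijenhuis J (fun _ => a) (fun _ => b) p) vzero) /\
  (forall p a b, h p a b = sum4 (fun i => sum4 (fun j =>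
       a i * b j * h p (basis i) (basis j)))) /\
  (forall i j, (i < 4)%nat -> (j < 4)%nat -> smooth (fun p => h p (basis i) (basis j))) /\
  (forall p a b, h p a b = h p b a) /\
  (forall p a, nonzero a -> 0 < h p a a) /\
  (forall p a b, h p (Japply (J p) a) (Japply (J p) b) = h p a b) /\
  (let om := fun p i j => h p (Japply (J p) (basis i)) (basis j) in
   forall p i j k, (i < 4)%nat -> (j < 4)%nat -> (k < 4)%nat ->
     pd (fun q => om q j k) i p + pd (fun q => om q k i) j p
     + pd (fun q => om q i j) k p = 0).

Definition ppwave : Metric := fun p i j =>
  match i, j with
  | O, O => - (p 2%nat ^ 2 + p 3%nat ^ 2)
  | O, S O | S O, O => 1
  | S (S O), S (S O) | S (S (S O)), S (S (S O)) => 1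
  | _, _ => 0
  end.
Definition Hf (p : Vec) : R := - p 2%nat ^ 2 - p 3%nat ^ 2.
Definition kf (p : Vec) : R := - p 3%nat.
Definition hf (p : Vec) : R := p 2%nat.
Definition Zf : Field := fun p i =>
  match i with
  | O => -1
  | S O => / 2 * (Hf p + kf p ^ 2 + hf p ^ 2)
  | S (S O) => kf p
  | S (S (S O)) => hf p
  | _ => 0
  end.
Definition Xf : Field := fun p i =>
  match i with S O => kf p | S (S O) => 1 | _ => 0 end.
Definition Yf : Field := fun p i =>
  match i with S O => hf p | S (S (S O)) => 1 | _ => 0 end.

From Pilot Require Import Defs.
From Stdlib Require Import Reals Lra Lia Bool ClassicalEpsilon FunctionalExtensionality.
Open Scope R_scope.

(* The inverse metric gives
   [grad u = d_v], which is parallel, and [Z = - d_u - y d_x + x d_y] is a Killing field;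
   for both, [(v, w) |-> g(nabla_v X, w)] is skew, so [nabla^o] vanishes and the condition
   [J nabla^o Z = nabla^o grad u] is empty. [H] is cut out by [du = 0] and
   [dv = - y dx + x dy], where [g] restricts to [dx^2 + dy^2], so it is spacelike, and [J]
   is the explicit matrix sending [(Z, grad u, X, Y)] to [(grad u, - Z, Y, - X)]. Then
   [g_K(a, a) = e^u (c1^2 + c2^2 + 2 c3^2 + 2 c4^2)] for a coframe [(c1, .., c4)], and the
   Kahler form of [g_K] is the exact form [d(e^u Z^flat)]. *)

Lemma pd_unique f i p l : has_pd f i p l -> pd f i p = l.
Proof.
  intro Hl. unfold pd.
  pose proof (epsilon_spec (inhabits 0) (fun l => has_pd f i p l) (ex_intro _ l Hl)) as Hspec.
  exact (uniqueness_limite _ _ _ _ Hspec Hl).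
Qed.

Lemma has_pd_pd f i p : (exists l, has_pd f i p l) -> has_pd f i p (pd f i p).
Proof. intros [l Hl]. rewrite (pd_unique f i p l Hl). exact Hl. Qed.

Lemma pd_ext f g i p : (forall q, f q = g q) -> pd f i p = pd g i p.
Proof. intro Hfg. f_equal. apply functional_extensionality. exact Hfg. Qed.

Lemma shift_0 p i : shift p i 0 = p.
Proof.
  apply functional_extensionality. intro j. unfold shift.
  destruct (Nat.eqb j i); ring.
Qed.

Lemma has_pd_const c i p : has_pd (fun _ => c) i p 0.
Proof. apply (derivable_pt_lim_const c). Qed.

Lemma pd_const c i p : pd (fun _ => c) i p = 0.
Proof. apply pd_unique, has_pd_const. Qed.

Lemma has_pd_coord n i p : has_pd (fun q => q n) i p (if Nat.eqb n i then 1 else 0).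
Proof.
  unfold has_pd, shift. destruct (Nat.eqb n i).
  - replace 1 with (0 + 1) by ring.
    apply (derivable_pt_lim_plus (fct_cte (p n)) id).
    + apply derivable_pt_lim_const.
    + apply derivable_pt_lim_id.
  - apply (derivable_pt_lim_const (p n)).
Qed.

Lemma has_pd_plus f g i p a b : has_pd f i p a -> has_pd g i p b ->
  has_pd (fun q => f q + g q) i p (a + b).
Proof. apply (derivable_pt_lim_plus (fun t => f (shift p i t)) (fun t => g (shift p i t))). Qed.

Lemma has_pd_opp f i p a : has_pd f i p a -> has_pd (fun q => - f q) i p (- a).
Proof. apply (derivable_pt_lim_opp (fun t => f (shift p i t))). Qed.

Lemma has_pd_mult f g i p a b : has_pd f i p a -> has_pd g i p b ->
  has_pd (fun q => f q * g q) i p (a * g p + f p * b).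
Proof.
  intros Hf Hg.
  pose proof (derivable_pt_lim_mult (fun t => f (shift p i t)) (fun t => g (shift p i t))
                0 a b Hf Hg) as Hfg.
  cbv beta in Hfg. rewrite shift_0 in Hfg. exact Hfg.
Qed.

Lemma has_pd_exp f i p a : has_pd f i p a -> has_pd (fun q => exp (f q)) i p (exp (f p) * a).
Proof.
  intro Hf.
  pose proof (derivable_pt_lim_comp (fun t => f (shift p i t)) exp 0 a (exp (f p)) Hf) as Hexp.
  cbv beta in Hexp. rewrite shift_0 in Hexp. apply Hexp, derivable_pt_lim_exp.
Qed.

Lemma cont_at_ext f g p : (forall q, f q = g q) -> cont_at f p -> cont_at g p.
Proof. intro Hfg. replace g with f by (apply functional_extensionality; exact Hfg). easy. Qed.

Lemma cont_at_const c p : cont_at (fun _ => c) p.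
Proof.
  intros eps Heps. exists 1. split; [lra|]. intros q _.
  rewrite Rminus_diag, Rabs_R0. exact Heps.
Qed.

Lemma cont_at_coord n p : (n < 4)%nat -> cont_at (fun q => q n) p.
Proof. intros Hn eps Heps. exists eps. split; [exact Heps|]. intros q Hq. exact (Hq n Hn). Qed.

Lemma cont_at_plus f g p : cont_at f p -> cont_at g p -> cont_at (fun q => f q + g q) p.
Proof.
  intros Hf Hg eps Heps.
  destruct (Hf (eps / 2) ltac:(lra)) as [d1 [Hd1 H1]].
  destruct (Hg (eps / 2) ltac:(lra)) as [d2 [Hd2 H2]].
  exists (Rmin d1 d2). split; [apply Rmin_pos; assumption|]. intros q Hq.
  assert (Hq1 : Rabs (f q - f p) < eps / 2).
  { apply H1. intros i Hi. pose proof (Hq i Hi). pose proof (Rmin_l d1 d2). lra. }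
  assert (Hq2 : Rabs (g q - g p) < eps / 2).
  { apply H2. intros i Hi. pose proof (Hq i Hi). pose proof (Rmin_r d1 d2). lra. }
  pose proof (Rabs_triang (f q - f p) (g q - g p)).
  replace (f q + g q - (f p + g p)) with (f q - f p + (g q - g p)) by ring. lra.
Qed.

Lemma cont_at_comp (h : R -> R) f p :
  cont_at f p -> continuity_pt h (f p) -> cont_at (fun q => h (f q)) p.
Proof.
  intros Hf Hh eps Heps. destruct (Hh eps Heps) as [d [Hd Hhd]].
  destruct (Hf d Hd) as [d1 [Hd1 Hfd]]. exists d1. split; [exact Hd1|].
  intros q Hq. destruct (Req_dec (f q) (f p)) as [Heq|Hneq].
  - rewrite Heq, Rminus_diag, Rabs_R0. exact Heps.
  - apply (Hhd (f q)). split; [split; [exact I | auto]|]. exact (Hfd q Hq).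
Qed.

(* Polarization reduces continuity of a product to that of a square. *)
Lemma cont_at_mult f g p : cont_at f p -> cont_at g p -> cont_at (fun q => f q * g q) p.
Proof.
  intros Hf Hg.
  assert (Hsq : forall k, cont_at k p -> cont_at (fun q => / 4 * k q ^ 2) p).
  { intros k Hk. apply (cont_at_comp (fun x => / 4 * x ^ 2)); [exact Hk | reg]. }
  assert (Hopp : forall k, cont_at k p -> cont_at (fun q => - k q) p).
  { intros k Hk. apply (cont_at_comp Ropp); [exact Hk | reg]. }
  apply (cont_at_ext (fun q => / 4 * (f q + g q) ^ 2 + - (/ 4 * (f q + - g q) ^ 2))).
  { intro q. field. }
  apply cont_at_plus; [|apply Hopp]; apply Hsq, cont_at_plus; auto.
Qed.

(* Functions built from coordinates, constants, +, *, - and exp: their partial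
   derivatives are again of this form, which gives smoothness by coinduction
   and lets [pd] be computed symbolically. *)
Inductive expr :=
  | ECst (r : R) | EVar (n : nat) | EAdd (a b : expr) | EMul (a b : expr)
  | EOpp (a : expr) | EExp (a : expr).

Fixpoint eval_expr (e : expr) (p : Vec) : R :=
  match e with
  | ECst r => r
  | EVar n => p n
  | EAdd a b => eval_expr a p + eval_expr b p
  | EMul a b => eval_expr a p * eval_expr b p
  | EOpp a => - eval_expr a p
  | EExp a => exp (eval_expr a p)
  end.

Fixpoint deriv_expr (e : expr) (i : nat) : expr :=
  match e with
  | ECst _ => ECst 0
  | EVar n => ECst (if Nat.eqb n i then 1 else 0)
  | EAdd a b => EAdd (deriv_expr a i) (deriv_expr b i)
  | EMul a b => EAdd (EMul (deriv_expr a i) b) (EMul a (deriv_expr b i))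
  | EOpp a => EOpp (deriv_expr a i)
  | EExp a => EMul (EExp a) (deriv_expr a i)
  end.

Fixpoint expr_in4 (e : expr) : bool :=
  match e with
  | ECst _ => true
  | EVar n => Nat.ltb n 4
  | EAdd a b | EMul a b => expr_in4 a && expr_in4 b
  | EOpp a | EExp a => expr_in4 a
  end.

Lemma has_pd_eval_expr e i p : has_pd (eval_expr e) i p (eval_expr (deriv_expr e i) p).
Proof.
  induction e; cbn.
  - apply has_pd_const.
  - apply has_pd_coord.
  - apply has_pd_plus; assumption.
  - apply has_pd_mult; assumption.
  - apply has_pd_opp; assumption.
  - apply has_pd_exp; assumption.
Qed.

Lemma pd_eval_expr f e i p :
  (forall q, f q = eval_expr e q) -> pd f i p = eval_expr (deriv_expr e i) p.
Proof.
  intro Hf. rewrite (pd_ext f (eval_expr e)) by exact Hf.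
  apply pd_unique, has_pd_eval_expr.
Qed.

Lemma expr_in4_deriv e i : expr_in4 e = true -> expr_in4 (deriv_expr e i) = true.
Proof.
  induction e; cbn; intro He; try reflexivity.
  - apply andb_true_iff in He as [Ha Hb]. rewrite IHe1, IHe2 by assumption. reflexivity.
  - apply andb_true_iff in He as [Ha Hb]. rewrite IHe1, IHe2, Ha, Hb by assumption. reflexivity.
  - auto.
  - rewrite He, IHe by assumption. reflexivity.
Qed.

Lemma cont_at_eval_expr e p : expr_in4 e = true -> cont_at (eval_expr e) p.
Proof.
  induction e; cbn; intro He.
  - apply cont_at_const.
  - apply cont_at_coord, Nat.ltb_lt, He.
  - apply andb_true_iff in He as [Ha Hb]. apply cont_at_plus; auto.
  - apply andb_true_iff in He as [Ha Hb]. apply cont_at_mult; auto.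
  - apply (cont_at_comp Ropp); [auto | reg].
  - apply (cont_at_comp exp); [auto | reg].
Qed.

Lemma smooth_coind (P : (Vec -> R) -> Prop) :
  (forall f, P f ->
     (forall p, cont_at f p) /\ (forall i p, (i < 4)%nat -> exists l, has_pd f i p l) /\
     (forall i, (i < 4)%nat -> P (pd f i))) ->
  forall f, P f -> smooth f.
Proof.
  intro HP. cofix CIH. intros f Hf. destruct (HP f Hf) as [Hcont [Hpd Hnext]].
  constructor; auto.
Qed.

Lemma smooth_eval_expr f e : expr_in4 e = true -> (forall q, f q = eval_expr e q) -> smooth f.
Proof.
  intros He Hf.
  apply (smooth_coind (fun f => exists e, expr_in4 e = true /\ f = eval_expr e)).
  2:{ exists e. split; [exact He | apply functional_extensionality, Hf]. }
  clear. intros f [e [He ->]]. split; [|split].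
  - intro p. apply cont_at_eval_expr, He.
  - intros i p _. eexists. apply has_pd_eval_expr.
  - intros i _. exists (deriv_expr e i). split; [apply expr_in4_deriv, He|].
    apply functional_extensionality. intro p. apply pd_eval_expr. reflexivity.
Qed.

Notation gradu := (grad ppwave (coord 0)).

(* [J_{g,Z,grad u}] for the orientation [o = -1], in the coordinates (u,v,x,y);
   its columns are forced by [J Z = grad u], [J grad u = - Z], [J X = Y], [J Y = - X]. *)
Definition Jpp (p : Vec) : Mat := fun i j =>
  let x := p 2%nat in let y := p 3%nat in let r := x ^ 2 + y ^ 2 in
  match i, j with
  | O, O => - r | O, S O => 1 | O, S (S O) => y | O, S (S (S O)) => - x
  | S O, O => -1 | S O, S O => 0 | S O, S (S O) => x | S O, S (S (S O)) => y
  | S (S O), O => - x - y * r | S (S O), S O => y | S (S O), S (S O) => y ^ 2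
  | S (S O), S (S (S O)) => -1 - x * y
  | S (S (S O)), O => - y + x * r | S (S (S O)), S O => - x
  | S (S (S O)), S (S O) => 1 - x * y | S (S (S O)), S (S (S O)) => x ^ 2
  | _, _ => 0
  end.

(* [dalpha_pp p i j = d_i alpha_j - d_j alpha_i] for [alpha = e^u Z^flat], where
   [Z^flat = (x^2 + y^2) du - dv - y dx + x dy]. *)
Definition dalpha_pp (p : Vec) : Mat := fun i j =>
  let x := p 2%nat in let y := p 3%nat in
  exp (p 0%nat) *
  match i, j with
  | O, S O => -1 | O, S (S O) => - y - 2 * x | O, S (S (S O)) => x - 2 * y
  | S O, O => 1
  | S (S O), O => y + 2 * x | S (S O), S (S (S O)) => 2
  | S (S (S O)), O => - x + 2 * y | S (S (S O)), S (S O) => -2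
  | _, _ => 0
  end.

Definition gK_pp (p : Vec) : Mat := fun i j => sum4 (fun l => dalpha_pp p i l * Jpp p l j).

Definition gK_form (p a b : Vec) : R :=
  sum4 (fun i => sum4 (fun j => a i * b j * gK_pp p i j)).

Declare Reduction unfold_data := cbv beta iota zeta delta
  [Zf Hf kf hf Xf Yf ppwave coord alpha sum4 basis Japply Jpp dalpha_pp gK_pp gK_form Nat.eqb].

Ltac reify q t :=
  lazymatch t with
  | q ?n => constr:(EVar n)
  | ?a + ?b => let x := reify q a in let y := reify q b in constr:(EAdd x y)
  | ?a - ?b => let x := reify q a in let y := reify q b in constr:(EAdd x (EOpp y))
  | ?a * ?b => let x := reify q a in let y := reify q b in constr:(EMul x y)
  | - ?a => let x := reify q a in constr:(EOpp x)
  | exp ?a => let x := reify q a in constr:(EExp x)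
  | _ ^ O => constr:(ECst 1)
  | ?a ^ (S ?m) => let x := reify q a in let y := reify q (a ^ m) in constr:(EMul x y)
  | _ => constr:(ECst t)
  end.

Ltac expr_of f :=
  let g := constr:(fun q : Vec =>
    ltac:(let t := eval unfold_data in (f q) in let e := reify q t in exact e)) in
  eval cbv beta in (g vzero).

Ltac eval_expr_eq :=
  intro; match goal with |- ?G => let G' := eval unfold_data in G in change G' end;
  cbn [eval_expr]; ring.

Ltac rewrite_pd :=
  match goal with |- context [pd ?f ?i ?p] =>
    let e := expr_of f in rewrite (pd_eval_expr f e i p) by eval_expr_eq
  end; cbn [eval_expr deriv_expr Nat.eqb].

Ltac prove_smooth :=
  match goal with |- smooth ?f =>
    let e := expr_of f in apply (smooth_eval_expr f e); [reflexivity | eval_expr_eq]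
  end.

Lemma lt4_cases i : (i < 4)%nat -> i = 0%nat \/ i = 1%nat \/ i = 2%nat \/ i = 3%nat.
Proof. lia. Qed.

Ltac case_lt4 i Hi := destruct (lt4_cases i Hi) as [ -> | [ -> | [ -> | -> ] ] ].

Lemma gdot_ppwave p a b : gdot ppwave p a b =
  - (p 2%nat ^ 2 + p 3%nat ^ 2) * a 0%nat * b 0%nat + a 0%nat * b 1%nat + a 1%nat * b 0%nat
  + a 2%nat * b 2%nat + a 3%nat * b 3%nat.
Proof. unfold gdot, sum4, ppwave. ring. Qed.

Definition raise_ppwave (p : Vec) (a : nat -> R) : Vec := fun i =>
  match i with
  | O => a 1%nat
  | S O => a 0%nat + (p 2%nat ^ 2 + p 3%nat ^ 2) * a 1%nat
  | S (S O) => a 2%nat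
  | S (S (S O)) => a 3%nat
  | _ => 0
  end.

Lemma raise_ppwaveE p a : veq (raise ppwave p a) (raise_ppwave p a).
Proof.
  unfold raise.
  set (P := fun w : Vec => forall k, (k < 4)%nat -> sum4 (fun j => ppwave p j k * w j) = a k).
  assert (Hsol : P (raise_ppwave p a)).
  { intros k Hk. unfold sum4, ppwave, raise_ppwave. case_lt4 k Hk; ring. }
  pose proof (epsilon_spec (inhabits vzero) P (ex_intro _ _ Hsol)) as Hw.
  set (w := epsilon _ P) in *. clearbody w.
  pose proof (Hw 0%nat ltac:(lia)) as H0. pose proof (Hw 1%nat ltac:(lia)) as H1.
  pose proof (Hw 2%nat ltac:(lia)) as H2. pose proof (Hw 3%nat ltac:(lia)) as H3.
  cbv beta iota delta [sum4 ppwave] in H0, H1, H2, H3.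
  intros i Hi. unfold raise_ppwave. case_lt4 i Hi; nra.
Qed.

Lemma gdot_raise_ppwave p c w :
  gdot ppwave p (raise ppwave p c) w = sum4 (fun k => c k * w k).
Proof. rewrite gdot_ppwave, !raise_ppwaveE by lia. unfold raise_ppwave, sum4. ring. Qed.

Lemma gradu_basis p : veq (gradu p) (basis 1).
Proof.
  intros i Hi. unfold grad. rewrite raise_ppwaveE by exact Hi. unfold raise_ppwave.
  rewrite !(pd_eval_expr (coord 0) (EVar 0)) by reflexivity.
  unfold basis. case_lt4 i Hi; cbn; ring.
Qed.

Lemma gradu0 p : gradu p 0%nat = 0. Proof. rewrite gradu_basis by lia. reflexivity. Qed.
Lemma gradu1 p : gradu p 1%nat = 1. Proof. rewrite gradu_basis by lia. reflexivity. Qed.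
Lemma gradu2 p : gradu p 2%nat = 0. Proof. rewrite gradu_basis by lia. reflexivity. Qed.
Lemma gradu3 p : gradu p 3%nat = 0. Proof. rewrite gradu_basis by lia. reflexivity. Qed.

Lemma inH_ppwave p w : inH ppwave Zf gradu p w <->
  w 0%nat = 0 /\ w 1%nat = - p 3%nat * w 2%nat + p 2%nat * w 3%nat.
Proof.
  unfold inH. rewrite !gdot_ppwave, gradu0, gradu1, gradu2, gradu3. unfold Zf, Hf, kf, hf.
  split; intros [H1 H2].
  - assert (Hw0 : w 0%nat = 0) by lra. split; [exact Hw0|]. rewrite Hw0 in H1. lra.
  - rewrite H1, H2. split; ring.
Qed.

Notation Jpw := (Jmat (-1) ppwave Zf gradu).

Lemma positive_ON_frame_rotation p e1 e2 :
  ON_frame ppwave Zf gradu p e1 e2 -> pos_frame (-1) Zf gradu p e1 e2 ->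
  e2 2%nat = - e1 3%nat /\ e2 3%nat = e1 2%nat.
Proof.
  intros [He1 [He2 [N1 [N2 N12]]]] Hpos.
  apply inH_ppwave in He1 as [A0 A1]. apply inH_ppwave in He2 as [B0 B1].
  rewrite gdot_ppwave, A0, A1 in N1. rewrite gdot_ppwave, B0, B1 in N2.
  rewrite gdot_ppwave, A0, A1, B0, B1 in N12.
  unfold pos_frame, det4, det3 in Hpos.
  rewrite gradu0, gradu1, gradu2, gradu3, A0, A1, B0, B1 in Hpos. unfold Zf, Hf, kf, hf in Hpos.
  set (a := e1 2%nat) in *. set (b := e1 3%nat) in *.
  set (c := e2 2%nat) in *. set (d := e2 3%nat) in *.
  assert (Na : a ^ 2 + b ^ 2 = 1) by lra. assert (Nc : c ^ 2 + d ^ 2 = 1) by lra.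
  assert (Nac : a * c + b * d = 0) by lra.
  (* Lagrange's identity forces [a d - b c = 1]. *)
  assert (Hdet : (a * d - b * c) ^ 2 + (a * c + b * d) ^ 2 = (a ^ 2 + b ^ 2) * (c ^ 2 + d ^ 2))
    by ring.
  rewrite Na, Nc, Nac in Hdet.
  assert (D1 : a * d - b * c = 1) by nra.
  assert (Ic : c * (a ^ 2 + b ^ 2) + b * (a * d - b * c) = a * (a * c + b * d)) by ring.
  assert (Id : d * (a ^ 2 + b ^ 2) - a * (a * d - b * c) = b * (a * c + b * d)) by ring.
  rewrite Na, D1, Nac in Ic, Id. split; lra.
Qed.

Lemma Jpp_spec p : Jprop (-1) ppwave Zf gradu p (Jpp p).
Proof.
  split; [|split].
  - intros i Hi. unfold Japply, sum4. rewrite gradu_basis by exact Hi.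
    unfold Zf, Hf, kf, hf, basis. case_lt4 i Hi; cbn; ring.
  - intros i Hi. unfold Japply, sum4, vopp. rewrite gradu0, gradu1, gradu2, gradu3.
    unfold Zf, Hf, kf, hf. case_lt4 i Hi; cbn; ring.
  - intros e1 e2 Hon Hpos.
    destruct (positive_ON_frame_rotation p e1 e2 Hon Hpos) as [R2 R3].
    destruct Hon as [He1 [He2 _]].
    apply inH_ppwave in He1 as [A0 A1]. apply inH_ppwave in He2 as [B0 B1].
    split; intros i Hi; unfold Japply, sum4, vopp; case_lt4 i Hi; cbn;
      rewrite ?A0, ?A1, ?B0, ?B1, ?R2, ?R3; ring.
Qed.

Lemma XY_positive_ON_frame p :
  ON_frame ppwave Zf gradu p (Xf p) (Yf p) /\ pos_frame (-1) Zf gradu p (Xf p) (Yf p).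
Proof.
  split.
  - unfold ON_frame. rewrite !gdot_ppwave, !inH_ppwave. unfold Xf, Yf, kf, hf.
    repeat split; ring.
  - unfold pos_frame, det4, det3. rewrite gradu0, gradu1, gradu2, gradu3.
    unfold Zf, Xf, Yf, Hf, kf, hf. lra.
Qed.

(* [(Z, grad u, X, Y)] is a basis, so [J] is determined by its values on it. *)
Lemma Jprop_ppwave_unique p M : Jprop (-1) ppwave Zf gradu p M ->
  forall i j, (i < 4)%nat -> (j < 4)%nat -> M i j = Jpp p i j.
Proof.
  intros [HZ [Hgrad Hframe]]. destruct (XY_positive_ON_frame p) as [Hon Hpos].
  destruct (Hframe _ _ Hon Hpos) as [HX HY].
  intros i j Hi Hj.
  specialize (HZ i Hi). specialize (Hgrad i Hi). specialize (HX i Hi). specialize (HY i Hi).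
  unfold Japply, sum4, vopp in HZ, Hgrad, HX, HY.
  rewrite gradu0, gradu1, gradu2, gradu3 in Hgrad. rewrite gradu_basis in HZ by exact Hi.
  unfold Xf, Yf in HX, HY. cbv beta iota delta [Zf] in HZ.
  assert (E1 : M i 1%nat = - Zf p i) by lra.
  assert (E2 : M i 2%nat = Yf p i - kf p * M i 1%nat) by (unfold Yf; lra).
  assert (E3 : M i 3%nat = - Xf p i - hf p * M i 1%nat) by (unfold Xf; lra).
  assert (E0 : M i 0%nat = M i 1%nat * (/ 2 * (Hf p + kf p ^ 2 + hf p ^ 2))
      + kf p * M i 2%nat + hf p * M i 3%nat - basis 1 i) by lra.
  case_lt4 j Hj; rewrite ?E0, ?E2, ?E3, ?E1; unfold Zf, Xf, Yf, Hf, kf, hf, basis;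
    case_lt4 i Hi; cbn; ring.
Qed.

Lemma Jmat_ppwave_spec p : Jprop (-1) ppwave Zf gradu p (Jpw p).
Proof. unfold Jmat. apply epsilon_spec. exists (Jpp p). apply Jpp_spec. Qed.

Lemma Jmat_ppwave p i j : (i < 4)%nat -> (j < 4)%nat -> Jpw p i j = Jpp p i j.
Proof. apply Jprop_ppwave_unique, Jmat_ppwave_spec. Qed.

Lemma ppwave_semi_riemannian : semi_riemannian ppwave.
Proof.
  split; [|split].
  - intros p i j. destruct i as [|[|[|[|i]]]]; destruct j as [|[|[|[|j]]]]; reflexivity.
  - intro p. unfold det4, det3, ppwave. cbn. lra.
  - intros i j Hi Hj. case_lt4 i Hi; case_lt4 j Hj; prove_smooth.
Qed.

Lemma smooth_field_Zf : smooth_field Zf.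
Proof. intros i Hi. case_lt4 i Hi; prove_smooth. Qed.

Lemma smooth_field_gradu : smooth_field gradu.
Proof.
  intros i Hi.
  replace (fun p => gradu p i) with (fun _ : Vec => basis 1 i)
    by (apply functional_extensionality; intro p; symmetry; apply gradu_basis, Hi).
  prove_smooth.
Qed.

Lemma pd_gradu p i m : (m < 4)%nat -> pd (fun q => gradu q m) i p = 0.
Proof.
  intro Hm. rewrite (pd_ext _ (fun _ => basis 1 m)) by (intro; apply gradu_basis, Hm).
  apply pd_const.
Qed.

Lemma lin_indep_Zf_gradu p : lin_indep (Zf p) (gradu p).
Proof.
  intros s t H. pose proof (H 0%nat ltac:(lia)) as H0. pose proof (H 1%nat ltac:(lia)) as H1.
  rewrite gradu0 in H0. rewrite gradu1 in H1. unfold Zf, Hf, kf, hf in H0, H1.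
  assert (s = 0) by lra. subst s. split; lra.
Qed.

Lemma inH_ppwave_spacelike p w :
  inH ppwave Zf gradu p w -> Defs.nonzero w -> 0 < gdot ppwave p w w.
Proof.
  intros Hw [i [Hi Hwi]]. apply inH_ppwave in Hw as [W0 W1].
  rewrite gdot_ppwave, W0, W1.
  destruct (Rle_or_lt (w 2%nat ^ 2 + w 3%nat ^ 2) 0) as [Hle|Hlt]; [|nra].
  exfalso. assert (W2 : w 2%nat = 0) by nra. assert (W3 : w 3%nat = 0) by nra.
  apply Hwi. case_lt4 i Hi; rewrite ?W0, ?W1, ?W2, ?W3; ring.
Qed.

Lemma bracket_inH_ppwave X : smooth_field X -> (forall p, inH ppwave Zf gradu p (X p)) ->
  forall p, inH ppwave Zf gradu p (bracket Zf X p) /\ inH ppwave Zf gradu p (bracket gradu X p).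
Proof.
  intros HX HXH p.
  assert (X0 : forall q, X q 0%nat = 0) by (intro q; apply (inH_ppwave q (X q)), HXH).
  assert (X1 : forall q, X q 1%nat = - q 3%nat * X q 2%nat + q 2%nat * X q 3%nat)
    by (intro q; apply (inH_ppwave q (X q)), HXH).
  assert (HX_pd : forall m i, (m < 4)%nat -> (i < 4)%nat ->
            has_pd (fun q => X q m) i p (pd (fun q => X q m) i p)).
  { intros m i Hm Hi. apply has_pd_pd. destruct (HX m Hm) as [_ Hpd _]. apply Hpd, Hi. }
  assert (P0 : forall i, pd (fun q => X q 0%nat) i p = 0).
  { intro i. rewrite (pd_ext _ (fun _ => 0)) by exact X0. apply pd_const. }
  assert (P1 : forall i, (i < 4)%nat -> pd (fun q => X q 1%nat) i p =
     - (if Nat.eqb 3 i then 1 else 0) * X p 2%nat + - p 3%nat * pd (fun q => X q 2%nat) i p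
     + ((if Nat.eqb 2 i then 1 else 0) * X p 3%nat + p 2%nat * pd (fun q => X q 3%nat) i p)).
  { intros i Hi. rewrite (pd_ext _ (fun q => - q 3%nat * X q 2%nat + q 2%nat * X q 3%nat))
      by exact X1.
    apply pd_unique, has_pd_plus; apply has_pd_mult;
      auto using has_pd_opp, has_pd_coord with arith. }
  split; apply inH_ppwave; split; unfold bracket, sum4;
    rewrite ?P0, ?P1, ?pd_gradu by lia; repeat rewrite_pd;
    rewrite ?gradu0, ?gradu1, ?gradu2, ?gradu3, ?X0, ?X1; unfold Zf, Hf, kf, hf; cbn; ring.
Qed.

Lemma nabla0_killing g X p e1 e2 v :
  (forall a b, gdot g p (nabla g a X p) b + gdot g p (nabla g b X p) a = 0) ->
  forall i, nabla0 g X p e1 e2 v i = 0.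
Proof.
  intros Hkill i. unfold nabla0. cbv zeta. unfold sum2. cbn.
  pose proof (Hkill e1 e1) as K11. pose proof (Hkill e2 e2) as K22.
  pose proof (Hkill e1 e2) as K12.
  replace (gdot g p (nabla g e2 X p) e1) with (- gdot g p (nabla g e1 X p) e2) by lra.
  replace (gdot g p (nabla g e1 X p) e1) with 0 by lra.
  replace (gdot g p (nabla g e2 X p) e2) with 0 by lra.
  field.
Qed.

(* [Z = - d_u - y d_x + x d_y] generates a null translation combined with a rotation
   of the wave profile [x^2 + y^2], hence is Killing. *)
Lemma Zf_killing p v w :
  gdot ppwave p (nabla ppwave v Zf p) w + gdot ppwave p (nabla ppwave w Zf p) v = 0.
Proof.
  unfold nabla. rewrite !gdot_raise_ppwave. unfold chr1, sum4. repeat rewrite_pd.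
  unfold ppwave, Zf, Hf, kf, hf. ring.
Qed.

Lemma gradu_parallel p v w : gdot ppwave p (nabla ppwave v gradu p) w = 0.
Proof.
  unfold nabla. rewrite gdot_raise_ppwave. unfold chr1, sum4.
  rewrite !pd_gradu by lia. repeat rewrite_pd.
  rewrite gradu0, gradu1, gradu2, gradu3. unfold ppwave. ring.
Qed.

Lemma admissible_ppwave : admissible (-1) ppwave Zf gradu.
Proof.
  split; [exact ppwave_semi_riemannian|]. split; [exact smooth_field_Zf|].
  split; [exact smooth_field_gradu|]. split; [exact lin_indep_Zf_gradu|].
  split; [exact inH_ppwave_spacelike|]. split; [exact bracket_inH_ppwave|].
  split.
  { intros p e1 e2 v _ _ i Hi. unfold Japply, sum4.
    rewrite !(nabla0_killing ppwave Zf) by apply Zf_killing.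
    rewrite !(nabla0_killing ppwave gradu)
      by (intros; rewrite !gradu_parallel; ring).
    ring. }
  split.
  { exists (fun _ => 1), (coord 0). split; [prove_smooth|]. split; [prove_smooth|].
    intros p i Hi. ring. }
  split; intro p; exists 0, 0; intros i Hi; unfold grad; rewrite raise_ppwaveE by exact Hi;
    unfold raise_ppwave.
  - rewrite !(pd_ext (fun q => gdot ppwave q (Zf q) (gradu q)) (fun _ => -1))
      by (intro; rewrite gdot_ppwave, gradu0, gradu1, gradu2, gradu3;
          unfold Zf, Hf, kf, hf; ring).
    rewrite !pd_const. case_lt4 i Hi; ring.
  - rewrite !(pd_ext (fun q => gdot ppwave q (Zf q) (Zf q)) (fun _ => 0))
      by (intro; rewrite gdot_ppwave; unfold Zf, Hf, kf, hf; field).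
    rewrite !pd_const. case_lt4 i Hi; ring.
Qed.

Notation gKpw := (gK (-1) ppwave Zf gradu exp (coord 0)).

Lemma gK_ppwaveE p a b : gKpw p a b = gK_form p a b.
Proof.
  unfold gK, dform. unfold sum4 at 1. unfold sum4 at 1 2 3 4.
  repeat rewrite_pd.
  unfold Japply, sum4. rewrite !Jmat_ppwave by lia.
  unfold gK_form, gK_pp, dalpha_pp, Jpp, sum4. ring.
Qed.

Lemma Jmat_ppwave_sq p w : veq (Japply (Jpw p) (Japply (Jpw p) w)) (vopp w).
Proof.
  intros i Hi. unfold Japply, sum4, vopp. rewrite !Jmat_ppwave by lia.
  case_lt4 i Hi; unfold Jpp; cbn; ring.
Qed.

Lemma Jmat_ppwave_smooth i j : (i < 4)%nat -> (j < 4)%nat -> smooth (fun p => Jpw p i j).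
Proof.
  intros Hi Hj.
  replace (fun p => Jpw p i j) with (fun p => Jpp p i j)
    by (apply functional_extensionality; intro p; symmetry; apply Jmat_ppwave; assumption).
  case_lt4 i Hi; case_lt4 j Hj; prove_smooth.
Qed.

Ltac rewrite_Jmat_under_pd :=
  repeat match goal with |- context [pd ?f ?i ?p] =>
    lazymatch f with context [Jmat] =>
      erewrite (pd_ext f _ i p)
        by (intro; cbv beta; rewrite !Jmat_ppwave by lia; reflexivity)
    end
  end.

Lemma nijenhuis_ppwave a b p : veq (nijenhuis Jpw (fun _ => a) (fun _ => b) p) vzero.
Proof.
  intros m Hm. unfold nijenhuis, vsub, JF, bracket, vzero, Japply, sum4. cbv beta.
  case_lt4 m Hm; rewrite_Jmat_under_pd; rewrite ?pd_const; repeat rewrite_pd;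
    rewrite !Jmat_ppwave by lia; unfold Jpp; cbn; ring.
Qed.

Lemma gK_ppwave_bilinear p a b :
  gKpw p a b = sum4 (fun i => sum4 (fun j => a i * b j * gKpw p (basis i) (basis j))).
Proof. unfold sum4. rewrite !gK_ppwaveE. unfold gK_form, sum4, basis. cbn. ring. Qed.

Lemma gK_ppwave_smooth i j : (i < 4)%nat -> (j < 4)%nat ->
  smooth (fun p => gKpw p (basis i) (basis j)).
Proof.
  intros Hi Hj.
  replace (fun p => gKpw p (basis i) (basis j)) with (fun p => gK_pp p i j).
  - case_lt4 i Hi; case_lt4 j Hj; prove_smooth.
  - apply functional_extensionality. intro p. rewrite gK_ppwaveE.
    unfold gK_form, sum4, basis. case_lt4 i Hi; case_lt4 j Hj; cbn; ring.
Qed.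

Lemma gK_ppwave_sym p a b : gKpw p a b = gKpw p b a.
Proof. rewrite !gK_ppwaveE. unfold gK_form, gK_pp, dalpha_pp, Jpp, sum4. cbn. ring. Qed.

Lemma gK_ppwave_J_invariant p a b : gKpw p (Japply (Jpw p) a) (Japply (Jpw p) b) = gKpw p a b.
Proof.
  rewrite !gK_ppwaveE. unfold gK_form, Japply, sum4. rewrite !Jmat_ppwave by lia.
  unfold gK_pp, dalpha_pp, Jpp, sum4. cbn. ring.
Qed.

Lemma gK_ppwave_sum_of_squares p a :
  let x := p 2%nat in let y := p 3%nat in
  let c3 := a 2%nat - y * a 0%nat in let c4 := a 3%nat + x * a 0%nat in
  gKpw p a a = exp (p 0%nat) *
    (a 0%nat ^ 2 + (a 1%nat + y * c3 - x * c4) ^ 2 + 2 * c3 ^ 2 + 2 * c4 ^ 2).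
Proof. cbv zeta. rewrite gK_ppwaveE. unfold gK_form, gK_pp, dalpha_pp, Jpp, sum4. cbn. ring. Qed.

Lemma gK_ppwave_pos p a : Defs.nonzero a -> 0 < gKpw p a a.
Proof.
  intros [i [Hi Ha]]. rewrite gK_ppwave_sum_of_squares. cbv zeta.
  apply Rmult_lt_0_compat; [apply exp_pos|].
  set (c3 := a 2%nat - p 3%nat * a 0%nat). set (c4 := a 3%nat + p 2%nat * a 0%nat).
  set (c2 := a 1%nat + p 3%nat * c3 - p 2%nat * c4).
  destruct (Rle_or_lt (a 0%nat ^ 2 + c2 ^ 2 + 2 * c3 ^ 2 + 2 * c4 ^ 2) 0) as [Hle|]; [|assumption].
  exfalso.
  assert (A0 : a 0%nat = 0) by nra. assert (Z2 : c2 = 0) by nra.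
  assert (Z3 : c3 = 0) by nra. assert (Z4 : c4 = 0) by nra.
  unfold c2, c3, c4 in *. rewrite A0 in Z2, Z3, Z4.
  apply Ha. case_lt4 i Hi; nra.
Qed.

(* The Kahler form is [d(e^u Z^flat)] itself, so it is closed. *)
Lemma kahler_form_ppwave q j k : (j < 4)%nat -> (k < 4)%nat ->
  gKpw q (Japply (Jpw q) (basis j)) (basis k) = dalpha_pp q j k.
Proof.
  intros Hj Hk. rewrite gK_ppwaveE. unfold gK_form, Japply, sum4. rewrite !Jmat_ppwave by lia.
  unfold gK_pp, Jpp, sum4, basis. case_lt4 j Hj; case_lt4 k Hk; unfold dalpha_pp; cbn; ring.
Qed.

Lemma kahler_form_ppwave_closed p i j k : (i < 4)%nat -> (j < 4)%nat -> (k < 4)%nat ->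
  pd (fun q => gKpw q (Japply (Jpw q) (basis j)) (basis k)) i p
  + pd (fun q => gKpw q (Japply (Jpw q) (basis k)) (basis i)) j p
  + pd (fun q => gKpw q (Japply (Jpw q) (basis i)) (basis j)) k p = 0.
Proof.
  intros Hi Hj Hk.
  assert (Hform : forall a b, (a < 4)%nat -> (b < 4)%nat ->
    (fun q => gKpw q (Japply (Jpw q) (basis a)) (basis b)) = (fun q => dalpha_pp q a b)).
  { intros a b Ha Hb. apply functional_extensionality. intro q.
    apply kahler_form_ppwave; assumption. }
  rewrite !Hform by assumption.
  case_lt4 i Hi; case_lt4 j Hj; case_lt4 k Hk; repeat rewrite_pd; ring.
Qed.

Lemma kahler_ppwave : kahler Jpw gKpw.
Proof.
  split; [exact Jmat_ppwave_smooth|]. split; [exact Jmat_ppwave_sq|].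
  split; [intros; apply nijenhuis_ppwave|]. split; [exact gK_ppwave_bilinear|].
  split; [exact gK_ppwave_smooth|]. split; [exact gK_ppwave_sym|].
  split; [exact gK_ppwave_pos|]. split; [exact gK_ppwave_J_invariant|].
  cbv zeta. exact kahler_form_ppwave_closed.
Qed.

Theorem proposition10p1 :
  exists o : R, (o = 1 \/ o = -1) /\
    (forall p, veq (grad ppwave (coord 0) p) (basis 1)) /\
    (forall p, veq (Japply (Jmat o ppwave Zf (grad ppwave (coord 0)) p) (Xf p)) (Yf p)) /\
    admissible o ppwave Zf (grad ppwave (coord 0)) /\
    kahler (Jmat o ppwave Zf (grad ppwave (coord 0)))
           (gK o ppwave Zf (grad ppwave (coord 0)) exp (coord 0)).
Proof.
  exists (-1). split; [right; reflexivity|]. split; [exact gradu_basis|]. split.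
  - intro p. destruct (Jmat_ppwave_spec p) as [_ [_ Hframe]].
    destruct (XY_positive_ON_frame p) as [Hon Hpos]. apply (Hframe _ _ Hon Hpos).
  - split; [exact admissible_ppwave | exact kahler_ppwave].
Qed.
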